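(* Let $p$ be a prime number of the form $p = 5m^2 + 4mn + 9n^2$ with integers $m, n$. Then the equation $p x^4 - 41 y^4 = z^2$ has no rational solutions $(x,y,z)$ other than the trivial solution $x=y=z=0$. *)

From mathcomp Require Import all_boot all_order all_algebra.

From mathcomp Require Import all_boot all_order all_algebra.
From mathcomp Require Import zify ring.

Set Implicit Arguments.
Unset Strict Implicit.
Unset Printing Implicit Defensive.

(* Let f = 5x^2 + 4xy + 9y^2, so p = f(m, n).  Clearing denominators and
   common factors turns a nontrivial solution into a primitive one of
   Z^2 + 41 W^2 = p X^4 with W = Y^2.  Composing with a representation
   3^(2j) p = C^2 + 41 D^2 (j = 1 or 3) and dividing by p, which is possible
   after changing the sign of W, gives a primitive solution of
   R^2 + 41 S^2 = t^2 with t = 3^j X^2.  Such a t or its double is a square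
   modulo 41, which is impossible: t is 3 times a square prime to 41, and
   both 3 and 6 are non-residues modulo 41. *)

Lemma coprime_primesP a b :
  reflect (forall q, prime q -> q %| a -> ~~ (q %| b)) (coprime a b).
Proof.
apply: (iffP idP) => [cop_ab q pr_q q_a | no_q].
  apply/negP => q_b; have : q %| gcdn a b by rewrite dvdn_gcd q_a q_b.
  by rewrite (eqP cop_ab) dvdn1 => /eqP q1; rewrite q1 in pr_q.
have : forall q, prime q -> ~~ (q %| gcdn a b).
  by move=> q pr_q; rewrite dvdn_gcd negb_and -implybE; apply/implyP/no_q.
rewrite /coprime; case: (gcdn a b) => [|[|g]] // no_q_g.
  by have := no_q_g 2 isT.
by have [q pr_q q_g] := pdivP (isT : 1 < g.+2); case/negP: (no_q_g q pr_q).
Qed.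

Lemma coprime_mul_sqr a b w : coprime a b -> a * b = w ^ 2 -> exists c, a = c ^ 2.
Proof.
move=> cop_ab ab_eq; exists (gcdn a w); apply/eqP; rewrite eqn_dvd; apply/andP; split.
  rewrite expnS expn1 muln_gcdl dvdn_gcd dvdn_mulr //= muln_gcdr dvdn_gcd dvdn_mull //=.
  by rewrite mulnn -ab_eq dvdn_mulr.
have cop_gb : coprime (gcdn a w ^ 2) b.
  by rewrite coprime_pexpl //; apply: coprime_dvdl cop_ab; exact: dvdn_gcdl.
by rewrite -(Gauss_dvdr _ cop_gb) mulnC ab_eq dvdn_exp2r // dvdn_gcdr.
Qed.

Lemma coprime_mul_prime_sqr_residue q u v w : prime q -> coprime u v ->
  u * v = q * w ^ 2 -> exists d, u + v = d ^ 2 %[mod q].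
Proof.
move=> pr_q; wlog q_u : u v / q %| u => [wlog_q_u cop_uv uv_eq | ].
  have : q %| u * v by rewrite uv_eq dvdn_mulr.
  rewrite Euclid_dvdM // => /orP[q_u | q_v]; first exact: wlog_q_u.
  by rewrite addnC; apply: wlog_q_u; rewrite // 1?coprime_sym // mulnC.
case/dvdnP: q_u => k -> cop_kqv kqv_eq.
have vk_eq : v * k = w ^ 2.
  by apply/eqP; rewrite -(eqn_pmul2l (prime_gt0 pr_q)) -kqv_eq; apply/eqP; ring.
have cop_vk : coprime v k by rewrite coprime_sym (coprime_dvdl _ cop_kqv) ?dvdn_mulr.
have [d ->] := coprime_mul_sqr cop_vk vk_eq.
by exists d; rewrite modnMDl.
Qed.

Lemma sqr_add_prime_sqr_residue q r s t : prime q -> odd q -> coprime r t ->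
  r ^ 2 + q * s ^ 2 = t ^ 2 -> exists d, t = d ^ 2 %[mod q] \/ 2 * t = d ^ 2 %[mod q].
Proof.
move=> pr_q odd_q cop_rt rst_eq.
(* If r + t is odd, t - r and t + r are coprime with product q s^2 and sum 2t;
   otherwise r and t are odd, and (t - r)/2 and (t + r)/2 play the same role
   with sum t. *)
have le_rt : r <= t by rewrite -leq_sqr -rst_eq leq_addr.
have cop_r_tr : coprime r (t - r) by rewrite /coprime -gcdnDr subnK.
have [odd_rt | even_rt] := boolP (odd (r + t)).
  have odd_tr : odd (t - r) by rewrite oddB // addbC -oddD.
  have cop : coprime (t - r) (t + r).
    rewrite /coprime -{2}(subnK le_rt) -addnA gcdnDl addnn -mul2n -/(coprime _ _).
    by rewrite coprimeMr coprimen2 odd_tr coprime_sym.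
  have uv_eq : (t - r) * (t + r) = q * s ^ 2.
    by move: rst_eq; rewrite -(subnK le_rt) addnK; move: (t - r) => u; nia.
  have [d td] := coprime_mul_prime_sqr_residue pr_q cop uv_eq.
  by exists d; right; rewrite -td addnCA subnK // addnn mul2n.
have odd_t : odd t.
  have [odd_r | even_r] := boolP (odd r); first by move: even_rt; rewrite oddD odd_r /= negbK.
  by rewrite -coprime2n (coprime_dvdl _ cop_rt) ?dvdn2.
have odd_r : odd r by move: even_rt; rewrite oddD odd_t addbT negbK.
have [u tr_eq] : exists u, t - r = u.*2.
  by exists (t - r)./2; rewrite -[LHS]odd_double_half oddB // odd_t odd_r.
have even_s : ~~ odd s.
  apply: contraL odd_t => odd_s.
  by have := congr1 odd rst_eq; rewrite oddD oddM !oddX odd_q odd_r odd_s /= => <-.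
have [s' s_eq] : exists s', s = s'.*2.
  by exists s./2; rewrite -[LHS]odd_double_half (negbTE even_s).
have t_eq : t = u + (u + r) by rewrite addnA addnn -tr_eq subnK.
have cop : coprime u (u + r).
  rewrite /coprime gcdnDl -/(coprime u r) coprime_sym.
  by move: cop_r_tr; rewrite tr_eq -mul2n coprimeMr => /andP[].
have uv_eq : u * (u + r) = q * s' ^ 2.
  apply/eqP; rewrite -(eqn_pmul2l (isT : 0 < 4)); apply/eqP.
  by move: rst_eq; rewrite t_eq s_eq -!mul2n; nia.
have [d td] := coprime_mul_prime_sqr_residue pr_q cop uv_eq.
by exists d; left; rewrite t_eq.
Qed.

Lemma nonresidue_mod41_table : all (fun c => all (fun x => all (fun d =>
    c * x ^ 2 != d ^ 2 %[mod 41]) (iota 0 41)) (iota 1 40)) [:: 3; 6].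
Proof. by vm_compute. Qed.

Lemma nonresidue_mod41 c x d : c \in [:: 3; 6] -> ~~ (41 %| x) ->
  c * x ^ 2 != d ^ 2 %[mod 41].
Proof.
move=> c36 x_n41.
rewrite -modnMmr -(modnXm 2 41 x) -(modnXm 2 41 d) modnMmr.
have x41 : x %% 41 \in iota 1 40.
  by rewrite mem_iota; apply/andP; split; [rewrite lt0n; exact: x_n41 | exact: ltn_pmod].
have d41 : d %% 41 \in iota 0 41.
  by rewrite mem_iota; apply/andP; split; [exact: leq0n | exact: ltn_pmod].
by move: nonresidue_mod41_table => /allP/(_ c c36)/allP/(_ _ x41)/allP/(_ _ d41).
Qed.

Lemma sqr_add_41sqr_neq a b : a ^ 2 + 41 * b ^ 2 \notin [:: 15; 205].
Proof.
apply/negP => ab_in.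
have ab_le : a ^ 2 + 41 * b ^ 2 <= 205 by move: ab_in; rewrite !inE => /orP[] /eqP ->.
have a_lt : a < 15 by rewrite -(ltn_exp2r _ _ (isT : 0 < 2)); lia.
have b_lt : b < 3 by rewrite -(ltn_exp2r _ _ (isT : 0 < 2)); lia.
have table : all (fun a => all (fun b =>
    a ^ 2 + 41 * b ^ 2 \notin [:: 15; 205]) (iota 0 3)) (iota 0 15) by [].
move: table => /allP/(_ a _)/allP/(_ b _); rewrite !mem_iota a_lt b_lt ab_in.
by move=> /(_ isT isT).
Qed.

Lemma quartic_coprime p k X Y Z : prime p -> coprime X Y ->
  p * X ^ 4 = Z ^ 2 + k * Y ^ 4 -> coprime Z Y.
Proof.
move=> pr_p /coprime_primesP cop_XY eq_XYZ.
apply/coprime_primesP => q pr_q q_Z; apply/negP => q_Y.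
have nq_X : ~~ (q %| X) by apply: contraL q_Y; exact: cop_XY.
have : q %| p * X ^ 4 by rewrite eq_XYZ dvdn_add // ?dvdn_mull // dvdn_exp.
rewrite Euclid_dvdM // Euclid_dvdX // (negbTE nq_X) orbF dvdn_prime2 //.
move=> /eqP qp; subst q; case/negP: nq_X.
have pp_Y : p * p %| Y ^ 4.
  by rewrite mulnn (dvdn_trans (dvdn_exp2l p (isT : 2 <= 4))) // dvdn_exp2r.
have : p * p %| p * X ^ 4 by rewrite eq_XYZ dvdn_add ?(dvdn_mull k pp_Y) // mulnn dvdn_exp2r.
by rewrite dvdn_pmul2l ?prime_gt0 // Euclid_dvdX // andbT.
Qed.

Lemma quartic_prime_ndvd p l X Y Z : prime l -> coprime X Y ->
  p * X ^ 4 = Z ^ 2 + l * Y ^ 4 -> ~~ (l %| X).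
Proof.
move=> pr_l /coprime_primesP cop_XY eq_XYZ; apply/negP => l_X.
have l_pX : l * l %| p * X ^ 4.
  by rewrite dvdn_mull // mulnn (dvdn_trans (dvdn_exp2l l (isT : 2 <= 4))) // dvdn_exp2r.
have l_Z : l %| Z.
  suff : l %| Z ^ 2 by rewrite Euclid_dvdX // andbT.
  rewrite -(dvdn_addl _ (dvdn_mulr (Y ^ 4) (dvdnn l))) -eq_XYZ.
  exact: dvdn_trans (dvdn_mulr l (dvdnn l)) l_pX.
have l2_Z : l * l %| Z ^ 2 by rewrite mulnn dvdn_exp2r.
have : l * l %| l * Y ^ 4 by rewrite -(dvdn_addr _ l2_Z) -eq_XYZ.
rewrite dvdn_pmul2l ?prime_gt0 // Euclid_dvdX // andbT.
exact/negP/cop_XY.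
Qed.

Lemma quartic_primitive p k a b c : 0 < a -> p * a ^ 4 = c ^ 2 + k * b ^ 4 ->
  exists X Y Z, coprime X Y /\ p * X ^ 4 = Z ^ 2 + k * Y ^ 4.
Proof.
move=> a_gt0 eq_abc; set g := gcdn a b.
have g_gt0 : 0 < g by rewrite gcdn_gt0 a_gt0.
have [a' a_eq] : exists a', a = a' * g by exists (a %/ g); rewrite divnK ?dvdn_gcdl.
have [b' b_eq] : exists b', b = b' * g by exists (b %/ g); rewrite divnK ?dvdn_gcdr.
have cop : coprime a' b'.
  by rewrite /coprime -(eqn_pmul2r g_gt0) muln_gcdl -a_eq -b_eq mul1n.
have [c' c_eq] : exists c', c = c' * g ^ 2.
  suff g2_c : g ^ 2 %| c by exists (c %/ g ^ 2); rewrite divnK.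
  rewrite -(dvdn_pexp2r _ _ (isT : 0 < 2)) -expnM.
  have g4_b : g ^ 4 %| k * b ^ 4 by rewrite dvdn_mull // b_eq expnMn dvdn_mull.
  by rewrite -(dvdn_addl _ g4_b) -eq_abc dvdn_mull // a_eq expnMn dvdn_mull.
exists a', b', c'; split => //; apply/eqP.
rewrite -(@eqn_pmul2r (g ^ 4)) ?expn_gt0 ?g_gt0 //; apply/eqP.
have -> : p * a' ^ 4 * g ^ 4 = p * (a' * g) ^ 4 by ring.
by rewrite -a_eq eq_abc c_eq b_eq; ring.
Qed.

Import GRing.Theory Num.Theory.
Local Open Scope ring_scope.

Lemma abszX_even (m : int) (n : nat) : ~~ odd n -> (`|m| ^ n)%N%:Z = m ^+ n.
Proof. by move=> even_n; rewrite -abszX gez0_abs // exprn_even_ge0. Qed.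

Lemma sqr_add_absz (k : nat) (a b c : int) : a ^+ 2 + k%:R * b ^+ 2 = c ^+ 2 ->
  (`|a| ^ 2 + k * `|b| ^ 2 = `|c| ^ 2)%N.
Proof. by move=> abc; apply/eqP; rewrite -eqz_nat PoszD PoszM !abszX_even // -natz abc. Qed.

Lemma Euclid_dvdzM (q : nat) (a b : int) : prime q ->
  (q%:Z %| a * b)%Z = (q%:Z %| a)%Z || (q%:Z %| b)%Z.
Proof. by move=> pr_q; rewrite !dvdzE abszM Euclid_dvdM. Qed.

Lemma Euclid_dvdzX (q n : nat) (a : int) : prime q -> (0 < n)%N ->
  (q%:Z %| a ^+ n)%Z = (q%:Z %| a)%Z.
Proof. by move=> pr_q n_gt0; rewrite !dvdzE abszX Euclid_dvdX // n_gt0 andbT. Qed.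

(* Brahmagupta's identity:
   (Z^2 + k W^2)(C^2 + k D^2) = (Z C - k W D)^2 + k (Z D + W C)^2. *)
Section Composition.

Variables (p k : nat) (M K C D Z W : int).
Hypotheses (pr_p : prime p) (cop_pk : coprime p k).
Hypotheses (CD_eq : C ^+ 2 + k%:R * D ^+ 2 = p%:Z * M).
Hypotheses (ZW_eq : Z ^+ 2 + k%:R * W ^+ 2 = p%:Z * K).

Lemma compose_dvd : (p%:Z %| Z * C - k%:R * W * D)%Z -> (p%:Z %| Z * D + W * C)%Z.
Proof.
move=> p_P.
have kQ_eq : k%:R * (Z * D + W * C) ^+ 2 =
    p%:Z ^+ 2 * (M * K) - (Z * C - k%:R * W * D) ^+ 2.
  transitivity ((C ^+ 2 + k%:R * D ^+ 2) * (Z ^+ 2 + k%:R * W ^+ 2)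
                - (Z * C - k%:R * W * D) ^+ 2); first by ring.
  by rewrite CD_eq ZW_eq; ring.
have : (p%:Z ^+ 2 %| k%:R * (Z * D + W * C) ^+ 2)%Z.
  by rewrite kQ_eq rpredB ?dvdz_exp2r // dvdz_mulr.
by rewrite natz Gauss_dvdzr ?dvdz_pexp2r // coprimez_pexpl.
Qed.

Lemma compose_div : (p%:Z %| Z * C - k%:R * W * D)%Z ->
  exists R S, [/\ Z * C - k%:R * W * D = R * p%:Z, R ^+ 2 + k%:R * S ^+ 2 = M * K,
                  R * C + k%:R * S * D = M * Z & S * C - R * D = M * W].
Proof.
move=> p_P; have /dvdzP[S Q_eq] := compose_dvd p_P.
have /dvdzP[R P_eq] := p_P.
have p_neq0 : p%:Z != 0 by rewrite eqz_nat -lt0n prime_gt0.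
exists R, S; split => //.
- apply: (mulfI (expf_neq0 2 p_neq0)).
  transitivity ((Z * C - k%:R * W * D) ^+ 2 + k%:R * (Z * D + W * C) ^+ 2).
    by rewrite P_eq Q_eq; ring.
  transitivity ((C ^+ 2 + k%:R * D ^+ 2) * (Z ^+ 2 + k%:R * W ^+ 2)); first by ring.
  by rewrite CD_eq ZW_eq; ring.
- apply: (mulfI p_neq0).
  transitivity ((Z * C - k%:R * W * D) * C + k%:R * (Z * D + W * C) * D).
    by rewrite P_eq Q_eq; ring.
  by transitivity (Z * (C ^+ 2 + k%:R * D ^+ 2)); [ring | rewrite CD_eq; ring].
- apply: (mulfI p_neq0).
  transitivity ((Z * D + W * C) * C - (Z * C - k%:R * W * D) * D).
    by rewrite P_eq Q_eq; ring.
  by transitivity (W * (C ^+ 2 + k%:R * D ^+ 2)); [ring | rewrite CD_eq; ring].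
Qed.

End Composition.

Lemma coprime_compose (k : nat) (M t R S C D Z W : int) :
  R ^+ 2 + k%:R * S ^+ 2 = t ^+ 2 ->
  R * C + k%:R * S * D = M * Z -> S * C - R * D = M * W ->
  coprimez Z W -> coprimez t k%:Z -> coprimez R M -> coprimez R t.
Proof.
rewrite !coprimezE => RSt_eq Z_eq W_eq /coprime_primesP cop_ZW /coprime_primesP cop_tk.
move=> /coprime_primesP cop_RM; apply/coprime_primesP => q pr_q q_R; apply/negP => q_t.
have q_S : (q%:Z %| S)%Z.
  have : (q%:Z %| k%:R * S ^+ 2)%Z.
    by rewrite (_ : _ * _ = t ^+ 2 - R ^+ 2) ?rpredB ?dvdz_exp // -RSt_eq; ring.
  have nq_k : ~~ (q%:Z %| k%:Z)%Z := cop_tk q pr_q q_t.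
  by rewrite Euclid_dvdzM // natz (negbTE nq_k) Euclid_dvdzX.
have q_Rz : (q%:Z %| R)%Z := q_R.
have q_MZ : (q%:Z %| M * Z)%Z.
  by rewrite -Z_eq rpredD ?(dvdz_mulr _ q_Rz) ?(dvdz_mulr _ (dvdz_mull _ q_S)).
have q_MW : (q%:Z %| M * W)%Z.
  by rewrite -W_eq rpredB ?(dvdz_mulr _ q_Rz) ?(dvdz_mulr _ q_S).
have nq_M : ~~ (q%:Z %| M)%Z := cop_RM q pr_q q_R.
rewrite !Euclid_dvdzM // (negbTE nq_M) /= in q_MZ q_MW.
by case/negP: (cop_ZW _ pr_q q_MZ).
Qed.

Lemma no_descent41 (p j X : nat) (C D Z W : int) : prime p -> p != 41%N -> odd j ->
  C ^+ 2 + 41 * D ^+ 2 = p%:Z * (3 ^+ j) ^+ 2 ->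
  Z ^+ 2 + 41 * W ^+ 2 = p%:Z * X%:Z ^+ 4 -> coprimez Z W -> ~~ (41 %| X)%N ->
  (p%:Z %| Z * C - 41 * W * D)%Z -> ~~ (3 %| Z * C - 41 * W * D)%Z -> False.
Proof.
move=> pr_p p_neq41 odd_j CD_eq ZW_eq cop_ZW X_n41 p_P n3_P.
have cop_p41 : coprime p 41 by rewrite prime_coprime // dvdn_prime2.
have [R [S [P_eq RS_eq Z_eq W_eq]]] := compose_div pr_p cop_p41 CD_eq ZW_eq p_P.
set t : int := 3 ^+ j * X%:Z ^+ 2.
have RSt_eq : R ^+ 2 + 41 * S ^+ 2 = t ^+ 2 by rewrite RS_eq /t; ring.
have n3_R : ~~ (3 %| R)%Z by apply: contra n3_P; rewrite P_eq; apply: dvdz_mulr.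
have cop_Rt : coprimez R t.
  apply: coprime_compose RSt_eq Z_eq W_eq cop_ZW _ _.
    rewrite /t coprimezMl; apply/andP; split; apply: coprimezXl => //.
    by rewrite coprimezE /= coprime_sym prime_coprime.
  rewrite coprimez_sym; do 2!apply: coprimezXl.
  by rewrite coprimezE prime_coprime.
set Y := (3 ^ j./2 * X)%N.
have t_eq : `|t|%N = (3 * Y ^ 2)%N.
  have -> : `|t|%N = (3 ^ j * X ^ 2)%N by rewrite /t abszM !abszX.
  rewrite -{1}(odd_double_half j) odd_j add1n -mul2n [(2 * _)%N]mulnC expnS expnM.
  by rewrite /Y; ring.
have Y_n41 : ~~ (41 %| Y)%N by rewrite Euclid_dvdM // Euclid_dvdX.
have [d [td | td]] :=
  sqr_add_prime_sqr_residue (isT : prime 41) isT cop_Rt (sqr_add_absz RSt_eq).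
  by case/negP: (nonresidue_mod41 d (isT : (3 \in [:: 3; 6])%N) Y_n41); rewrite -t_eq td.
case/negP: (nonresidue_mod41 d (isT : (6 \in [:: 3; 6])%N) Y_n41).
have -> : (6 * Y ^ 2 = 2 * (3 * Y ^ 2))%N by rewrite mulnA.
by rewrite -t_eq td.
Qed.

Section Form.

Variables (p : nat) (m n : int).
Hypotheses (pr_p : prime p) (p_eq : p%:Z = 5 * m ^+ 2 + 4 * m * n + 9 * n ^+ 2).

Lemma form_prime_neq : p \notin [:: 3; 41]%N.
Proof.
have sum_eq : (`|(5 * m + 2 * n)%R| ^ 2 + 41 * `|n| ^ 2)%N = (5 * p)%N.
  apply/eqP; rewrite -eqz_nat PoszD (PoszM 41%N) (PoszM 5%N) !abszX_even // p_eq.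
  by apply/eqP; ring.
apply: contra (sqr_add_41sqr_neq `|(5 * m + 2 * n)%R| `|n|); rewrite sum_eq !inE.
by case/orP => /eqP ->.
Qed.

Lemma form_ndvd3 : ~~ (3 %| m)%Z /\ ~~ (3 %| 2 * m + n)%Z.
Proof.
suff : ~~ (3 %| m * (2 * m + n))%Z by rewrite (@Euclid_dvdzM 3) // negb_or => /andP.
apply: contra form_prime_neq => three_mn.
have three_p : (3 %| p%:Z)%Z.
  have -> : p%:Z = m * (2 * m + n) + 3 * (m ^+ 2 + m * n + 3 * n ^+ 2) by rewrite p_eq; ring.
  by rewrite rpredD // dvdz_mulr.
have : (3 %| p)%N := three_p.
by rewrite dvdn_prime2 // => /eqP <-.
Qed.

(* 9 = g(0, 1) and 27^2 = g(11, -2) for the inverse form g = 5x^2 - 4xy + 9y^2;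
   composing them with p = f(m, n) gives representations by x^2 + 41y^2. *)
Lemma form_mul9 : (2 * m + 9 * n) ^+ 2 + 41 * m ^+ 2 = p%:Z * (3 ^+ 1) ^+ 2.
Proof. by rewrite p_eq; ring. Qed.

Lemma form_mul729 :
  (59 * m + 40 * n) ^+ 2 + 41 * (2 * m - 11 * n) ^+ 2 = p%:Z * (3 ^+ 3) ^+ 2.
Proof. by rewrite p_eq; ring. Qed.

Lemma form_mul729_dvd (Z W K : int) :
  Z ^+ 2 + 41 * W ^+ 2 = p%:Z * K -> coprimez Z W ->
  (p%:Z %| Z * (2 * m + 9 * n) - 41 * W * m)%Z ->
  (3 %| Z * (2 * m + 9 * n) - 41 * W * m)%Z ->
  (p%:Z %| Z * (59 * m + 40 * n) - 41 * W * (2 * m - 11 * n))%Z /\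
  ~~ (3 %| Z * (59 * m + 40 * n) - 41 * W * (2 * m - 11 * n))%Z.
Proof.
move=> ZW_eq cop_ZW p_P1 three_P1.
have [n3_m n3_mn] := form_ndvd3.
have := form_prime_neq; rewrite !inE negb_or => /andP[p_neq3 p_neq41].
have cop_p41 : coprime p 41 by rewrite prime_coprime // dvdn_prime2.
have p_Q1 := compose_dvd cop_p41 form_mul9 ZW_eq p_P1.
split.
  have : (p%:Z %| 9 * (Z * (59 * m + 40 * n) - 41 * W * (2 * m - 11 * n)))%Z.
    have -> : 9 * (Z * (59 * m + 40 * n) - 41 * W * (2 * m - 11 * n)) =
        40 * (Z * (2 * m + 9 * n) - 41 * W * m) + 451 * (Z * m + W * (2 * m + 9 * n)).
      by ring.
    by rewrite rpredD // dvdz_mull.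
  rewrite Euclid_dvdzM // (_ : 9 = 3 ^+ 2) // Euclid_dvdzX //.
  by rewrite dvdzE dvdn_prime2 // (negbTE p_neq3).
have three_WZ : (3 %| W - Z)%Z.
  have : (3 %| m * (W - Z))%Z.
    have -> : m * (W - Z) = (Z * (2 * m + 9 * n) - 41 * W * m)
                            - 3 * (Z * m + 3 * Z * n - 14 * W * m) by ring.
    by rewrite rpredB // dvdz_mulr.
  by rewrite (@Euclid_dvdzM 3) // (negbTE n3_m).
have n3_ZW : ~~ (3 %| Z + W)%Z.
  apply: contraL cop_ZW => three_ZW; rewrite coprimezE; apply/coprime_primesP.
  have three_W : (3 %| W)%Z.
    have : (3 %| 2 * W)%Z.
      have -> : 2 * W = (Z + W) + (W - Z) by ring.
      exact: rpredD.
    by rewrite (@Euclid_dvdzM 3).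
  have three_Z : (3 %| Z)%Z.
    have -> : Z = (Z + W) - W by ring.
    exact: rpredB.
  by move/(_ 3 isT three_Z)/negP.
apply: contra n3_ZW => three_P3.
have : (3 %| (2 * m + n) * (Z + W))%Z.
  have -> : (2 * m + n) * (Z + W) = (Z * (59 * m + 40 * n) - 41 * W * (2 * m - 11 * n))
                 - 3 * (Z * (19 * m + 13 * n) - W * (28 * m - 150 * n)) by ring.
  by rewrite rpredB // dvdz_mulr.
by rewrite (@Euclid_dvdzM 3) // (negbTE n3_mn).
Qed.

End Form.

(* Whichever of the multipliers 3 and 27 is used must leave 3 prime to the
   descended term, so that the new solution is still primitive. *)
Lemma form_quartic_int (p : nat) (m n Z W : int) (X : nat) : prime p ->
  p%:Z = 5 * m ^+ 2 + 4 * m * n + 9 * n ^+ 2 ->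
  Z ^+ 2 + 41 * W ^+ 2 = p%:Z * X%:Z ^+ 4 -> coprimez Z W -> ~~ (41 %| X)%N -> False.
Proof.
move=> pr_p p_eq.
have := form_prime_neq p_eq; rewrite !inE negb_or => /andP[_ p_neq41].
have CD1 := form_mul9 p_eq.
wlog p_P1 : W / (p%:Z %| Z * (2 * m + 9 * n) - 41 * W * m)%Z.
  move=> wlog_P1 ZW_eq cop_ZW X_n41.
  have : (p%:Z %| (Z * (2 * m + 9 * n) - 41 * W * m)
                  * (Z * (2 * m + 9 * n) - 41 * (- W) * m))%Z.
    have -> : (Z * (2 * m + 9 * n) - 41 * W * m) * (Z * (2 * m + 9 * n) - 41 * (- W) * m)
        = (2 * m + 9 * n) ^+ 2 * (Z ^+ 2 + 41 * W ^+ 2)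
          - 41 * W ^+ 2 * ((2 * m + 9 * n) ^+ 2 + 41 * m ^+ 2) by ring.
    by rewrite ZW_eq CD1 rpredB // dvdz_mull // dvdz_mulr.
  rewrite Euclid_dvdzM // => /orP[p_P1 | p_P1]; first exact: wlog_P1 p_P1 ZW_eq cop_ZW X_n41.
  by apply: (wlog_P1 (- W)); rewrite ?sqrrN ?coprimezN.
move=> ZW_eq cop_ZW X_n41.
have [n3_P1 | /negPn three_P1] := boolP (~~ (3 %| Z * (2 * m + 9 * n) - 41 * W * m)%Z).
  exact: no_descent41 pr_p p_neq41 (isT : odd 1) CD1 ZW_eq cop_ZW X_n41 p_P1 n3_P1.
have [p_P3 n3_P3] := form_mul729_dvd pr_p p_eq ZW_eq cop_ZW p_P1 three_P1.
exact: no_descent41 pr_p p_neq41 (isT : odd 3) (form_mul729 p_eq) ZW_eq cop_ZW X_n41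
  p_P3 n3_P3.
Qed.

Lemma form_quartic_nat (p : nat) (m n : int) (X Y Z : nat) : prime p ->
  p%:Z = 5 * m ^+ 2 + 4 * m * n + 9 * n ^+ 2 ->
  coprime X Y -> (p * X ^ 4 = Z ^ 2 + 41 * Y ^ 4)%N -> False.
Proof.
move=> pr_p p_eq cop_XY XYZ_eq.
apply: (@form_quartic_int p m n Z%:Z (Y%:Z ^+ 2) X pr_p p_eq).
- have := congr1 (fun k : nat => k%:R : int) XYZ_eq.
  by rewrite /= !(natrD, natrM, natrX) !natz => ->; ring.
- exact/coprimezXr/(quartic_coprime pr_p cop_XY XYZ_eq).
- exact: quartic_prime_ndvd (isT : prime 41) cop_XY XYZ_eq.
Qed.

Lemma quartic_rat_nat (p k : nat) (x y z : rat) : x != 0 ->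
  p%:R * x ^+ 4 - k%:R * y ^+ 4 = z ^+ 2 ->
  exists a b c : nat, (0 < a)%N /\ (p * a ^ 4 = c ^ 2 + k * b ^ 4)%N.
Proof.
move=> x_neq0 xyz_eq.
set dx := denq x; set dy := denq y; set dz := denq z.
set X := numq x * dy * dz; set Y := numq y * dx * dz.
set Z := numq z * dx * dy * (dx * dy * dz).
have XYZ_eq : p%:Z * X ^+ 4 = Z ^+ 2 + k%:Z * Y ^+ 4.
  apply: (@intr_inj rat).
  rewrite !(rmorphD, rmorphM, rmorphXn) /= !numqE -/dx -/dy -/dz -!pmulrn.
  apply/eqP; rewrite -subr_eq0; apply/eqP.
  transitivity ((dx%:~R * dy%:~R * dz%:~R) ^+ 4
                 * (p%:R * x ^+ 4 - k%:R * y ^+ 4 - z ^+ 2) : rat); first by ring.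
  by rewrite xyz_eq subrr mulr0.
exists `|X|%N, `|Y|%N, `|Z|%N; split.
  by rewrite absz_gt0 !mulf_neq0 ?numq_eq0 ?denq_neq0.
apply/eqP; rewrite -eqz_nat PoszD (PoszM p) (PoszM k) !abszX_even //.
by rewrite XYZ_eq.
Qed.

Theorem proposition1 (p : nat) (m n : int) :
  prime p ->
  (p%:Z = 5 * m ^+ 2 + 4 * m * n + 9 * n ^+ 2) ->
  forall x y z : rat,
    p%:R * x ^+ 4 - 41 * y ^+ 4 = z ^+ 2 ->
    x = 0 /\ y = 0 /\ z = 0.
Proof.
move=> pr_p p_eq x y z xyz_eq.
have x0 : x = 0.
  apply: contra_eq isT => x_neq0.
  have [a [b [c [a_gt0 abc_eq]]]] := quartic_rat_nat x_neq0 xyz_eq.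
  have [X [Y [Z [cop_XY XYZ_eq]]]] := quartic_primitive a_gt0 abc_eq.
  by case: (form_quartic_nat pr_p p_eq cop_XY XYZ_eq).
have yz_eq : z ^+ 2 + 41 * y ^+ 4 = 0.
  by rewrite -xyz_eq x0 expr0n /= mulr0 sub0r addNr.
have y4_ge0 : 0 <= 41 * y ^+ 4 by rewrite mulr_ge0 // exprn_even_ge0.
move/eqP: yz_eq; rewrite paddr_eq0 ?sqr_ge0 // sqrf_eq0 mulf_eq0 pnatr_eq0 expf_eq0 /=.
by case/andP => /eqP -> /eqP ->.
Qed.
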